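(* Let $\mathbb{C}[X]^*$ be the linear dual of $\mathbb{C}[X]$ with the convolution product $(f*g)(X^n)=\sum_{k=0}^n\binom{n}{k}f(X^k)g(X^{n-k})$, let $I=\{f\in\mathbb{C}[X]^*\mid f(1)=0\}$, let $\mathbb{C}[X]^{\circ}$ be the subalgebra of those $f\in\mathbb{C}[X]^*$ vanishing on some non-zero ideal of $\mathbb{C}[X]$, and let $J=I\cap\mathbb{C}[X]^{\circ}$. Let $\widehat{\mathbb{C}[X]^\circ}=\varprojlim_n \mathbb{C}[X]^\circ/J^n$ be the $J$-adic completion, and let $\widehat{\iota}:\widehat{\mathbb{C}[X]^\circ}\to\varprojlim_n\mathbb{C}[X]^*/I^n\cong\mathbb{C}[X]^*$ be the map induced by the inclusion $\iota:\mathbb{C}[X]^\circ\subseteq\mathbb{C}[X]^*$ (with $\mathbb{C}[X]^*$ carrying the $I$-adic topology, for which it is complete). The following are equivalent: (1) $\widehat{\iota}$ is injective; (2) $\widehat{\iota}$ is a homeomorphism; (3) the $J$-adic filtration $(J^n)_{n\geq0}$ and the induced filtration $(I^n\cap\mathbb{C}[X]^\circ)_{n\geq0}$ on $\mathbb{C}[X]^\circ$ coincide; (4) the $J$-adic topology and the topology induced from the $I$-adic topology of $\mathbb{C}[X]^*$ on $\mathbb{C}[X]^\circ$ are equivalent.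
   Context: The identification $\varprojlim_n\mathbb{C}[X]^*/I^n\cong\mathbb{C}[X]^*$ comes from $\mathbb{C}[X]^*/I^{n+1}\cong(\mathbb{C}[X]_{\leq n})^*$. The completion $\widehat{\mathbb{C}[X]^\circ}$ carries the topology given by the kernels of the projections $\widehat{\mathbb{C}[X]^\circ}\to\mathbb{C}[X]^\circ/J^n$. *)

From HB Require Import structures.
From mathcomp Require Import all_boot all_order all_algebra.
From mathcomp Require Import complex.
From mathcomp Require Import Rstruct.
From Stdlib Require Import ClassicalEpsilon.
Set Implicit Arguments. Unset Strict Implicit. Unset Printing Implicit Defensive.
Import Order.TTheory GRing.Theory Num.Theory.
Local Open Scope ring_scope.

Definition C : fieldType := (Rdefinitions.R)[i].

(** [DF] = C[X]^dual, the linear dual of C[X]: a linear form f is determined by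
    its values f(X^n) on the monomial basis, so f is a function nat -> C
    with f n = f(X^n). *)
Definition DF := nat -> C.

Definition evalF (f : DF) (q : {poly C}) : C := \sum_(i < size q) q`_i * f i.

Definition addF (f g : DF) : DF := fun n => f n + g n.
Definition oppF (f : DF) : DF := fun n => - f n.
Definition zeroF : DF := fun _ => 0.
Definition convF (f g : DF) : DF :=
  fun n => \sum_(k < n.+1) 'C(n, k)%:R * f k * g (n - k)%N.
Definition oneF : DF := fun n => (n == 0%N)%:R.

Definition sumF (s : seq DF) : DF := foldr addF zeroF s.
Definition prodF (s : seq DF) : DF := foldr convF oneF s.

Definition Iid (f : DF) : Prop := f 0%N = 0.

Definition Cfin (f : DF) : Prop :=
  exists2 p : {poly C}, p != 0 & forall q : {poly C}, evalF f (p * q) = 0.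

Definition Jid (f : DF) : Prop := Iid f /\ Cfin f.

(** n-th power S^n of an ideal S of a (commutative) subring A of C[X]^dual,
    computed inside A: the ideal of A generated by all products of n
    elements of S, i.e. the finite sums  sum_i r_i * s_{i,1} * ... * s_{i,n}
    with r_i in A and s_{i,j} in S.  (For n = 0 this is A itself.) *)
Definition powIdeal (A S : DF -> Prop) (n : nat) (x : DF) : Prop :=
  exists s : seq (DF * seq DF),
    (forall p, List.In p s ->
       [/\ A p.1, size p.2 = n & forall y, List.In y p.2 -> S y])
    /\ x = sumF [seq convF p.1 (prodF p.2) | p <- s].

Definition allF (f : DF) : Prop := True.

Definition Ipow (n : nat) : DF -> Prop := powIdeal allF Iid n.
Definition Jpow (n : nat) : DF -> Prop := powIdeal Cfin Jid n.

(** Cosets a + J^n of C[X]^o, i.e. elements of C[X]^o / J^n, viewed as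
    subsets of DF. *)
Definition cosetJ (n : nat) (a : DF) : DF -> Prop :=
  fun y => Jpow n (addF y (oppF a)).
Definition is_cosetJ (n : nat) (X : DF -> Prop) : Prop :=
  exists2 a, Cfin a & X = cosetJ n a.

(** The J-adic completion  lim_n C[X]^o / J^n : compatible families of
    cosets (x_n)_n, x_n in C[X]^o/J^n, with x_{n+1} mapping to x_n under the
    projection C[X]^o/J^(n+1) -> C[X]^o/J^n (i.e. x_{n+1} is contained in x_n). *)
Definition is_compat (x : nat -> DF -> Prop) : Prop :=
  (forall n, is_cosetJ n (x n)) /\
  (forall n y, x n.+1 y -> x n y).
Record Compl := MkCompl { cval :> nat -> DF -> Prop ; cvalP : is_compat cval }.

(** The map hat-iota : lim C[X]^o/J^n -> lim C[X]^dual/I^n = C[X]^dual induced by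
    the inclusion C[X]^o in C[X]^dual, where the identification uses
    C[X]^dual/I^(k+1) = (C[X]_{<=k})^dual: the image g of x satisfies
    g(X^k) = a(X^k) for a representative a in C[X]^o of the coset x_{k+1}
    (independent of the choice since J^(k+1) is contained in I^(k+1), whose
    elements vanish on C[X]_{<=k}). *)
Lemma rep_ex (x : Compl) (n : nat) :
  exists a : DF, Cfin a /\ cval x n = cosetJ n a.
Proof. by case: (cvalP x) => H _; case: (H n) => a Ha E; exists a. Qed.

Definition rep (x : Compl) (n : nat) : DF :=
  proj1_sig (constructive_indefinite_description _ (rep_ex x n)).

Definition iota_hat (x : Compl) : DF := fun k => rep x k.+1 k.

(** Topology of the completion: generated by the kernels of the projections
    to C[X]^o/J^n, i.e. U is open iff for every x in U there is n such that
    every y with the same n-th projection as x is in U. *)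
Definition open_Compl (U : Compl -> Prop) : Prop :=
  forall x, U x -> exists n, forall y : Compl, cval y n = cval x n -> U y.

Definition open_Iadic (V : DF -> Prop) : Prop :=
  forall g, V g -> exists n, forall h, Ipow n (addF h (oppF g)) -> V h.

Definition open_Jadic (U : DF -> Prop) : Prop :=
  (forall f, U f -> Cfin f) /\
  forall f, U f -> exists n, forall h, Cfin h -> Jpow n (addF h (oppF f)) -> U h.

Definition open_induced (U : DF -> Prop) : Prop :=
  exists2 V, open_Iadic V & forall f, U f <-> (V f /\ Cfin f).

Definition homeo (F : Compl -> DF) : Prop :=
  bijective F /\
  (forall V, open_Iadic V -> open_Compl (fun x => V (F x))) /\
  (forall U, open_Compl U -> open_Iadic (fun g => exists2 x, U x & g = F x)).

(* All four conditions fail, which proves the equivalences.  Identify a linear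
   form f on C[X] with the exponential generating function sum_n f(X^n) t^n/n!:
   the convolution becomes the product of power series, I becomes O(t) and I^n
   becomes O(t^n).  A form vanishes on a non-zero ideal (p) iff it satisfies the
   linear ODE p(d/dt) f = 0, so C[X]^o is the algebra of exponential polynomials
   sum_a P_a(t) e^(a t), whose terms with distinct exponents are independent.
   Hence sum_a P_a(t) e^(a t) |-> sum_a P_a(0) Im a is a well-defined derivation
   at the augmentation and vanishes on J^2.  It does not vanish on the tails
   e^(i t) - sum_(k<m) (i t)^k/k!, which lie in I^m /\ C[X]^o; these tails form
   a non-zero element of the completion killed by iota_hat, and they show that
   neither the filtrations nor the topologies agree. *)

From HB Require Import structures.
From mathcomp Require Import all_boot all_order all_algebra complex Rstruct.
From mathcomp Require Import boolp.
From mathcomp Require Import ring zify.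
Set Implicit Arguments. Unset Strict Implicit. Unset Printing Implicit Defensive.
Import Order.TTheory GRing.Theory Num.Theory.
Local Open Scope ring_scope.

(** * The convolution algebra of C[X]^* *)

Definition CC : numClosedFieldType := (Rdefinitions.R)[i].

Lemma natf_fact_neq0 n : (n`!%:R : CC) != 0.
Proof. by rewrite pnatr_eq0 -lt0n fact_gt0. Qed.

(* [f : egf] stands for the exponential generating function [sum_n f n t^n / n!];
   [egf_mul] below is [convF], the product of these power series. *)
Definition egf := nat -> CC.
HB.instance Definition _ := Choice.copy egf (nat -> CC).

Lemma egfP (f g : egf) : (forall n, f n = g n) -> f = g.
Proof. exact: funext. Qed.

Definition egf_add (f g : egf) : egf := fun n => f n + g n.
Definition egf_opp (f : egf) : egf := fun n => - f n.
Definition egf_zero : egf := fun _ => 0.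

Lemma egf_addA : associative egf_add.
Proof. by move=> f g h; apply: egfP => n; apply: addrA. Qed.
Lemma egf_addC : commutative egf_add.
Proof. by move=> f g; apply: egfP => n; apply: addrC. Qed.
Lemma egf_add0 : left_id egf_zero egf_add.
Proof. by move=> f; apply: egfP => n; apply: add0r. Qed.
Lemma egf_addN : left_inverse egf_zero egf_opp egf_add.
Proof. by move=> f; apply: egfP => n; apply: addNr. Qed.
HB.instance Definition _ :=
  GRing.isZmodule.Build egf egf_addA egf_addC egf_add0 egf_addN.

Definition egf_scale (c : CC) (f : egf) : egf := fun n => c * f n.

Lemma egf_scaleA a b f : egf_scale a (egf_scale b f) = egf_scale (a * b) f.
Proof. by apply: egfP => n; apply: mulrA. Qed.
Lemma egf_scale1 : left_id 1 egf_scale.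
Proof. by move=> f; apply: egfP => n; apply: mul1r. Qed.
Lemma egf_scaleDr : right_distributive egf_scale +%R.
Proof. by move=> a f g; apply: egfP => n; apply: mulrDr. Qed.
Lemma egf_scaleDl f : {morph egf_scale^~ f : a b / a + b}.
Proof. by move=> a b; apply: egfP => n; apply: mulrDl. Qed.
HB.instance Definition _ := GRing.Zmodule_isLmodule.Build CC egf
  egf_scaleA egf_scale1 egf_scaleDr egf_scaleDl.

Lemma egfD (f g : egf) n : (f + g) n = f n + g n. Proof. by []. Qed.
Lemma egfN (f : egf) n : (- f) n = - f n. Proof. by []. Qed.
Lemma egfB (f g : egf) n : (f - g) n = f n - g n. Proof. by []. Qed.
Lemma egf0 n : (0 : egf) n = 0. Proof. by []. Qed.
Lemma egfZ c (f : egf) n : (c *: f) n = c * f n. Proof. by []. Qed.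
Lemma egf_sum I (r : seq I) (P : pred I) (F : I -> egf) n :
  (\sum_(i <- r | P i) F i) n = \sum_(i <- r | P i) F i n.
Proof.
elim: r => [|i r IH]; first by rewrite !big_nil.
by rewrite !big_cons; case: (P i); rewrite ?egfD IH.
Qed.

Definition egf_trunc (f : egf) (N : nat) : {poly CC} := \poly_(i < N) (f i / i`!%:R).

Lemma coef_egf_trunc f N j : (j < N)%N -> (egf_trunc f N)`_j = f j / j`!%:R.
Proof. by move=> ltjN; rewrite coef_poly ltjN. Qed.

Definition egf_mul (f g : egf) : egf :=
  fun n => \sum_(k < n.+1) 'C(n, k)%:R * f k * g (n - k)%N.
Definition egf_one : egf := fun n => (n == 0%N)%:R.

(* The ring laws are inherited from {poly CC}: the [n]-th term of a product only
   depends on the terms of index at most [n]. *)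
Lemma egf_mulE (f g : egf) (P Q : {poly CC}) n :
  (forall j, (j <= n)%N -> P`_j = f j / j`!%:R) ->
  (forall j, (j <= n)%N -> Q`_j = g j / j`!%:R) ->
  egf_mul f g n = n`!%:R * (P * Q)`_n.
Proof.
move=> PE QE; rewrite coefM mulr_sumr; apply: eq_bigr => -[k /= ltkn] _.
rewrite PE // QE ?leq_subr // -(bin_fact (ltnSE ltkn)) !natrM.
by field; rewrite !natf_fact_neq0.
Qed.

Lemma egf_mul_trunc f g n :
  egf_mul f g n = n`!%:R * (egf_trunc f n.+1 * egf_trunc g n.+1)`_n.
Proof. by apply: egf_mulE => j lejn; rewrite coef_egf_trunc. Qed.

Lemma coef_egf_mul_trunc f g N j : (j < N)%N ->
  egf_mul f g j / j`!%:R = (egf_trunc f N * egf_trunc g N)`_j.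
Proof.
move=> ltjN; rewrite (@egf_mulE f g (egf_trunc f N) (egf_trunc g N)).
- by rewrite mulrC mulKf ?natf_fact_neq0.
- by move=> i leij; rewrite coef_egf_trunc // (leq_ltn_trans leij).
- by move=> i leij; rewrite coef_egf_trunc // (leq_ltn_trans leij).
Qed.

Lemma egf_mulA : associative egf_mul.
Proof.
move=> f g h; apply: egfP => n.
set F := egf_trunc f n.+1; set G := egf_trunc g n.+1; set H := egf_trunc h n.+1.
rewrite (@egf_mulE f (egf_mul g h) F (G * H)).
- rewrite (@egf_mulE (egf_mul f g) h (F * G) H).
  + by rewrite mulrA.
  + by move=> j lejn; rewrite (coef_egf_mul_trunc _ _ (lejn : (j < n.+1)%N)).
  + by move=> j lejn; rewrite coef_egf_trunc.
- by move=> j lejn; rewrite coef_egf_trunc.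
- by move=> j lejn; rewrite (coef_egf_mul_trunc _ _ (lejn : (j < n.+1)%N)).
Qed.

Lemma egf_mulC : commutative egf_mul.
Proof.
by move=> f g; apply: egfP => n; rewrite !egf_mul_trunc [egf_trunc f _ * _]mulrC.
Qed.

Lemma egf_mul1 : left_id egf_one egf_mul.
Proof.
move=> f; apply: egfP => n; rewrite (@egf_mulE egf_one f 1 (egf_trunc f n.+1)).
- by rewrite mul1r coef_egf_trunc // mulrC divfK ?natf_fact_neq0.
- by move=> j _; rewrite coefC /egf_one; case: eqP => [->|_]; rewrite ?divr1 ?mul0r.
- by move=> j lejn; rewrite coef_egf_trunc.
Qed.

Lemma egf_mulDl : left_distributive egf_mul +%R.
Proof.
move=> f g h; apply: egfP => n; rewrite egfD -big_split /=.
by apply: eq_bigr => k _; rewrite egfD mulrDr mulrDl.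
Qed.

Lemma egf_one_neq0 : egf_one != 0.
Proof. by apply/eqP => /(congr1 (fun f : egf => f 0%N)) /eqP; rewrite oner_eq0. Qed.

HB.instance Definition _ :=
  GRing.Zmodule_isComNzRing.Build egf
    egf_mulA egf_mulC egf_mul1 egf_mulDl egf_one_neq0.

Lemma egf_scaleAl (c : CC) (f g : egf) : c *: (f * g) = c *: f * g.
Proof.
apply: egfP => n; rewrite egfZ mulr_sumr; apply: eq_bigr => k _.
by rewrite egfZ mulrA mulrCA mulrA.
Qed.
HB.instance Definition _ := GRing.Lmodule_isLalgebra.Build CC egf egf_scaleAl.
HB.instance Definition _ := GRing.Lalgebra_isComAlgebra.Build CC egf.

Lemma egfM (f g : egf) n :
  (f * g) n = \sum_(k < n.+1) 'C(n, k)%:R * f k * g (n - k)%N.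
Proof. by []. Qed.
Lemma egf1 n : (1 : egf) n = (n == 0%N)%:R. Proof. by []. Qed.
Lemma egfM0 (f g : egf) : (f * g) 0%N = f 0%N * g 0%N.
Proof. by rewrite egfM big_ord1 mul1r. Qed.

Definition egf_deriv (f : egf) : egf := fun n => f n.+1.

Lemma egf_deriv_is_linear : linear egf_deriv.
Proof. by []. Qed.
HB.instance Definition _ :=
  GRing.isLinear.Build CC egf egf _ egf_deriv egf_deriv_is_linear.

Lemma coef_deriv_egf_trunc f N j : (j.+1 < N)%N ->
  (egf_trunc f N)^`()`_j = egf_deriv f j / j`!%:R.
Proof.
move=> ltjN.
rewrite coef_deriv coef_egf_trunc // factS natrM -mulr_natr /egf_deriv.
by field; rewrite natf_fact_neq0 addrC natr1 pnatr_eq0.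
Qed.

Lemma egf_derivM (f g : egf) :
  egf_deriv (f * g) = egf_deriv f * g + f * egf_deriv g.
Proof.
apply: egfP => n.
change (egf_mul f g n.+1 = egf_mul (egf_deriv f) g n + egf_mul f (egf_deriv g) n).
have truncE h j : (j <= n.+1)%N -> (egf_trunc h n.+2)`_j = h j / j`!%:R.
  by move=> lejn; rewrite coef_egf_trunc.
rewrite (egf_mulE (truncE f) (truncE g)).
rewrite (@egf_mulE _ g (egf_trunc f n.+2)^`() (egf_trunc g n.+2)); first last.
- by move=> j lejn; rewrite truncE // leqW.
- by move=> j lejn; rewrite coef_deriv_egf_trunc.
rewrite (@egf_mulE f _ (egf_trunc f n.+2) (egf_trunc g n.+2)^`()); first last.
- by move=> j lejn; rewrite coef_deriv_egf_trunc.
- by move=> j lejn; rewrite truncE // leqW.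
rewrite -mulrDr -coefD -derivM coef_deriv factS natrM -mulr_natr; ring.
Qed.

Definition egf_poly (P : {poly CC}) : egf := fun n => n`!%:R * P`_n.

Lemma egf_poly_is_linear : linear egf_poly.
Proof.
by move=> c P Q; apply: egfP => n; rewrite egfD egfZ /egf_poly coefD coefZ; ring.
Qed.
HB.instance Definition _ :=
  GRing.isLinear.Build CC {poly CC} egf _ egf_poly egf_poly_is_linear.

Lemma egf_poly_is_monoid_morphism : monoid_morphism egf_poly.
Proof.
split.
  by apply: egfP => -[|n]; rewrite /egf_poly coef1 egf1 /= ?mulr1 ?mulr0.
move=> P Q; apply: egfP => n; rewrite [RHS](@egf_mulE _ _ P Q) //.
by move=> j _; rewrite /egf_poly mulrC mulKf ?natf_fact_neq0.
by move=> j _; rewrite /egf_poly mulrC mulKf ?natf_fact_neq0.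
Qed.
HB.instance Definition _ :=
  GRing.isMonoidMorphism.Build {poly CC} egf egf_poly egf_poly_is_monoid_morphism.

Lemma egf_deriv_poly P : egf_deriv (egf_poly P) = egf_poly P^`().
Proof.
apply: egfP => n.
by rewrite /egf_deriv /egf_poly coef_deriv factS natrM -mulr_natr; ring.
Qed.

Definition egf_exp (a : CC) : egf := fun n => a ^+ n.

Lemma egf_exp0 : egf_exp 0 = 1.
Proof. by apply: egfP => n; rewrite /egf_exp egf1 expr0n. Qed.

Lemma egf_deriv_exp a : egf_deriv (egf_exp a) = a *: egf_exp a.
Proof. by apply: egfP => n; rewrite /egf_deriv /egf_exp egfZ exprS. Qed.

Lemma egf_deriv_eq_scale a (h : egf) :
  egf_deriv h = a *: h -> h = h 0%N *: egf_exp a.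
Proof.
move=> dh; apply: egfP; elim=> [|n IH]; first by rewrite egfZ /egf_exp mulr1.
have := congr1 (fun f : egf => f n) dh; rewrite /egf_deriv egfZ => ->.
by rewrite IH !egfZ /egf_exp exprS mulrCA.
Qed.

Lemma egf_expD a b : egf_exp (a + b) = egf_exp a * egf_exp b.
Proof.
have dM : egf_deriv (egf_exp a * egf_exp b) = (a + b) *: (egf_exp a * egf_exp b).
  by rewrite egf_derivM !egf_deriv_exp -scalerAl -scalerAr scalerDl.
rewrite [RHS](egf_deriv_eq_scale dM) [LHS](egf_deriv_eq_scale (egf_deriv_exp _)).
by rewrite egfM0 /egf_exp !expr0 mulr1.
Qed.

Definition expoly (a : CC) (P : {poly CC}) : egf := egf_poly P * egf_exp a.

Lemma expoly_is_linear a : linear (expoly a).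
Proof. by move=> c P Q; rewrite /expoly linearP mulrDl scalerAl. Qed.
HB.instance Definition _ a :=
  GRing.isLinear.Build CC {poly CC} egf _ (expoly a) (expoly_is_linear a).

Lemma expolyM a b P Q : expoly a P * expoly b Q = expoly (a + b) (P * Q).
Proof. by rewrite /expoly rmorphM egf_expD; ring. Qed.

Lemma expoly_at0 a P : expoly a P 0%N = P`_0.
Proof. by rewrite /expoly egfM0 /egf_poly /egf_exp mul1r mulr1. Qed.

Lemma expoly0 P : expoly 0 P = egf_poly P.
Proof. by rewrite /expoly egf_exp0 mulr1. Qed.

Lemma expolyC a c : expoly a c%:P = c *: egf_exp a.
Proof. by rewrite -alg_polyC linearZ /= /expoly rmorph1 mul1r. Qed.

Lemma expoly_eq0 a P : expoly a P = 0 -> P = 0.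
Proof.
move=> /(congr1 (fun f => f * expoly (- a) 1)).
rewrite mul0r expolyM mulr1 subrr expoly0.
move=> P0; apply/polyP => n; have /eqP := congr1 (fun f : egf => f n) P0.
by rewrite egf0 coef0 mulf_eq0 (negbTE (natf_fact_neq0 n)) => /eqP.
Qed.

Definition shift_deriv (d : CC) (P : {poly CC}) := P^`() + d *: P.

Definition dsub (c : CC) (f : egf) : egf := egf_deriv f - c *: f.

Lemma dsub_is_linear c : linear (dsub c).
Proof.
by move=> k f g; rewrite /dsub linearP scalerDr scalerA mulrC -scalerA; ring.
Qed.
HB.instance Definition _ c :=
  GRing.isLinear.Build CC egf egf _ (dsub c) (dsub_is_linear c).

Lemma dsub_expoly c b P : dsub c (expoly b P) = expoly b (shift_deriv (b - c) P).
Proof.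
rewrite /shift_deriv linearD linearZ /= scalerBl addrA /dsub /expoly.
by rewrite egf_derivM egf_deriv_poly egf_deriv_exp -scalerAr.
Qed.

(** * Forms vanishing on an ideal *)

Definition eval_form (f : egf) (q : {poly CC}) : CC := \sum_(i < size q) q`_i * f i.

Lemma eval_form_widen f (q : {poly CC}) N :
  (size q <= N)%N -> eval_form f q = \sum_(i < N) q`_i * f i.
Proof.
move=> leqN; rewrite /eval_form (big_ord_widen N (fun i => q`_i * f i) leqN).
rewrite big_mkcond; apply: eq_bigr => i _; case: ifP => // /negbT.
by rewrite -leqNgt => /(nth_default 0) ->; rewrite mul0r.
Qed.

Lemma eval_form_is_linear f : linear_for *%R (eval_form f).
Proof.
move=> c p q; pose N := maxn (size p) (size q).
have lepN : (size p <= N)%N := leq_maxl _ _.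
have leqN : (size q <= N)%N := leq_maxr _ _.
have lecpqN : (size (c *: p + q)%R <= N)%N.
  rewrite (leq_trans (size_polyD _ _)) // geq_max leqN andbT.
  exact: leq_trans (size_scale_leq _ _) lepN.
rewrite (eval_form_widen f lecpqN) (eval_form_widen f lepN) (eval_form_widen f leqN).
rewrite mulr_sumr -big_split; apply: eq_bigr => i _ /=.
by rewrite coefD coefZ mulrDl mulrA.
Qed.
HB.instance Definition _ f :=
  GRing.isLinear.Build CC {poly CC} CC _ (eval_form f) (eval_form_is_linear f).

Lemma eval_formDl f g q : eval_form (f + g) q = eval_form f q + eval_form g q.
Proof. by rewrite -big_split; apply: eq_bigr => i _; rewrite egfD mulrDr. Qed.

Lemma eval_formNl f q : eval_form (- f) q = - eval_form f q.
Proof. by rewrite -sumrN; apply: eq_bigr => i _; rewrite egfN mulrN. Qed.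

Lemma eval_formZl c f q : eval_form (c *: f) q = c * eval_form f q.
Proof. by rewrite mulr_sumr; apply: eq_bigr => i _; rewrite egfZ mulrCA. Qed.

Lemma eval_form_Xn f n : eval_form f 'X^n = f n.
Proof.
rewrite (@eval_form_widen f _ n.+1) ?size_polyXn //.
rewrite big_ord_recr /= coefXn eqxx mul1r.
by rewrite big1 ?add0r // => -[i ltin] _; rewrite coefXn /= ltn_eqF ?mul0r.
Qed.

Lemma eval_form_XM f q : eval_form f ('X * q) = eval_form (egf_deriv f) q.
Proof.
rewrite (@eval_form_widen f _ (size q).+1); last first.
  by rewrite (leq_trans (size_polyMleq _ _)) // size_polyX.
by rewrite big_ord_recl coefXM mul0r add0r; apply: eq_bigr => i _; rewrite coefXM.
Qed.

Lemma eval_form_dsub c f q :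
  eval_form f (('X - c%:P) * q) = eval_form (dsub c f) q.
Proof.
rewrite mulrBl linearB /= eval_form_XM mul_polyC linearZ /= /dsub.
by rewrite eval_formDl eval_formNl eval_formZl.
Qed.

Definition annihilates (p : {poly CC}) (f : egf) :=
  forall q, eval_form f (p * q) = 0.

Lemma annihilates_dsub c p f :
  annihilates (('X - c%:P) * p) f <-> annihilates p (dsub c f).
Proof.
by split=> ann q; [rewrite -eval_form_dsub mulrA | rewrite -mulrA eval_form_dsub].
Qed.

Lemma annihilatesMr p r f : annihilates p f -> annihilates (p * r) f.
Proof. by move=> ann q; rewrite -mulrA. Qed.

Lemma annihilatesMl p r f : annihilates p f -> annihilates (r * p) f.
Proof. by rewrite mulrC; apply: annihilatesMr. Qed.

Lemma annihilates_addp p r f :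
  annihilates p f -> annihilates r f -> annihilates (p + r) f.
Proof. by move=> annp annr q; rewrite mulrDl linearD /= annp annr addr0. Qed.

Lemma annihilates0 p : annihilates p 0.
Proof. by move=> q; rewrite /eval_form big1 // => i _; rewrite egf0 mulr0. Qed.

Lemma annihilatesD p f g :
  annihilates p f -> annihilates p g -> annihilates p (f + g).
Proof. by move=> annf anng q; rewrite eval_formDl annf anng addr0. Qed.

Lemma annihilatesN p f : annihilates p f -> annihilates p (- f).
Proof. by move=> annf q; rewrite eval_formNl annf oppr0. Qed.

Lemma annihilatesC c f : c != 0 -> annihilates c%:P f -> f = 0.
Proof.
move=> c0 ann; apply: egfP => n; have /eqP := ann 'X^n.
by rewrite mul_polyC linearZ /= eval_form_Xn mulf_eq0 (negbTE c0) => /eqP.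
Qed.

Lemma annihilates_coprime p r f :
  coprimep p r -> annihilates p f -> annihilates r f -> f = 0.
Proof.
move=> /Bezout_eq1_coprimepP[[u v] /= uv1] annp annr.
apply: (annihilatesC (oner_neq0 CC)); rewrite polyC1 -uv1.
by apply: annihilates_addp; apply: annihilatesMl.
Qed.

Lemma annihilates_expoly a (P : {poly CC}) k :
  (size P <= k)%N -> annihilates (('X - a%:P) ^+ k) (expoly a P).
Proof.
elim: k P => [|k IH] P.
  by rewrite leqn0 size_poly_eq0 => /eqP ->; rewrite linear0; apply: annihilates0.
move=> lePk; have [->|P0] := eqVneq P 0; first by rewrite linear0; apply: annihilates0.
rewrite exprS; apply/annihilates_dsub.
rewrite dsub_expoly subrr /shift_deriv scale0r addr0.
by apply: IH; rewrite -ltnS (leq_trans (lt_size_deriv P0)).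
Qed.

Definition expoly_sum (l : seq (CC * {poly CC})) : egf :=
  \sum_(x <- l) expoly x.1 x.2.

Definition expoly_ann (l : seq (CC * {poly CC})) : {poly CC} :=
  \prod_(x <- l) ('X - x.1%:P) ^+ size x.2.

Lemma expoly_sum_nil : expoly_sum [::] = 0.
Proof. exact: big_nil. Qed.

Lemma expoly_sum_cons x l : expoly_sum (x :: l) = expoly x.1 x.2 + expoly_sum l.
Proof. exact: big_cons. Qed.

Lemma expoly_sum_cat l1 l2 : expoly_sum (l1 ++ l2) = expoly_sum l1 + expoly_sum l2.
Proof. exact: big_cat. Qed.

Lemma expoly_ann_neq0 l : expoly_ann l != 0.
Proof.
by rewrite prodf_seq_neq0; apply/allP => x _; rewrite expf_neq0 ?polyXsubC_eq0.
Qed.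

Lemma annihilates_expoly_sum l : annihilates (expoly_ann l) (expoly_sum l).
Proof.
elim: l => [|x l IH]; first by rewrite expoly_sum_nil; apply: annihilates0.
rewrite expoly_sum_cons /expoly_ann big_cons.
apply: annihilatesD; first by apply: annihilatesMr; apply: annihilates_expoly.
exact: annihilatesMl.
Qed.

Lemma coprimep_expoly_ann a k l :
  a \notin [seq x.1 | x <- l] -> coprimep (('X - a%:P) ^+ k) (expoly_ann l).
Proof.
elim: l => [|x l IH]; first by rewrite /expoly_ann big_nil coprimep1.
rewrite /= inE negb_or => /andP[neq_ax /IH cop].
rewrite /expoly_ann big_cons coprimepMr cop andbT.
apply/coprimep_expl/coprimep_expr.
by rewrite coprimep_XsubC rootE hornerXsubC subr_eq0 eq_sym.
Qed.

(* [expoly a Q = - expoly_sum l] is annihilated by the coprime polynomials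
   [('X - a)^(size Q)] and [expoly_ann l]. *)
Lemma expoly_indep a (Q : {poly CC}) l :
  a \notin [seq x.1 | x <- l] -> expoly a Q + expoly_sum l = 0 -> Q = 0.
Proof.
move=> a_notin /eqP; rewrite addr_eq0 => /eqP eqQ; apply: (@expoly_eq0 a).
apply: (annihilates_coprime (coprimep_expoly_ann (size Q) a_notin)).
  exact: annihilates_expoly.
by rewrite eqQ; apply/annihilatesN/annihilates_expoly_sum.
Qed.

Lemma poly_antiderivative (Q : {poly CC}) : exists R : {poly CC}, R^`() = Q.
Proof.
exists (\poly_(i < (size Q).+1) (if i is j.+1 then Q`_j / j.+1%:R else 0)).
apply/polyP => i; rewrite coef_deriv coef_poly ltnS.
case: ltnP => [_|leQi]; last by rewrite mul0rn nth_default.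
by rewrite -(mulr_natr (Q`_i / _)) divfK // pnatr_eq0.
Qed.

Lemma shift_deriv_surj d (Q : {poly CC}) : exists R, shift_deriv d R = Q.
Proof.
have [->|d0] := eqVneq d 0.
  have [R dR] := poly_antiderivative Q.
  by exists R; rewrite /shift_deriv scale0r addr0.
elim: {Q}(size Q) {-2}Q (leqnn (size Q)) => [|k IH] Q leQk.
  exists 0; move: leQk; rewrite leqn0 size_poly_eq0 => /eqP ->.
  by rewrite /shift_deriv deriv0 scaler0 addr0.
have [->|Q0] := eqVneq Q 0.
  by exists 0; rewrite /shift_deriv deriv0 scaler0 addr0.
have [R1 dR1] : exists R1, shift_deriv d R1 = Q^`().
  by apply: IH; rewrite -ltnS (leq_trans (lt_size_deriv Q0)).
(* [R = (Q - R1) / d], since then [R' + d R = (Q' - R1')/d + Q - R1 = Q]. *)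
exists (d^-1 *: (Q - R1)); move: dR1; rewrite /shift_deriv => dR1.
rewrite derivZ derivB -dR1 scalerA mulfV // scale1r scalerBr scalerDr scalerA.
by rewrite mulVf // scale1r [_ + R1]addrC addrK addrC subrK.
Qed.

Lemma dsub_expoly_surj c b (Q : {poly CC}) :
  exists l, dsub c (expoly_sum l) = expoly b Q.
Proof.
have [R dR] := shift_deriv_surj (b - c) Q.
by exists [:: (b, R)]; rewrite expoly_sum_cons expoly_sum_nil addr0 dsub_expoly dR.
Qed.

Lemma dsub_expoly_sum_surj c l : exists l', dsub c (expoly_sum l') = expoly_sum l.
Proof.
elim: l => [|x l [l2 dl2]]; first by exists [::]; rewrite expoly_sum_nil linear0.
have [l1 dl1] := dsub_expoly_surj c x.1 x.2.
by exists (l1 ++ l2); rewrite expoly_sum_cat linearD /= dl1 dl2 expoly_sum_cons.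
Qed.

(* Induction on [size p]: for a root [a] of [p], [f' - a f] is an exponential
   polynomial [g]; solve [h' - a h = g] among exponential polynomials, and then
   [(f - h)' = a (f - h)] forces [f - h] to be a multiple of [e^(a t)]. *)
Lemma annihilated_expoly_sum (p : {poly CC}) f :
  p != 0 -> annihilates p f -> exists l, f = expoly_sum l.
Proof.
elim: {p}(size p) {-2}p (leqnn (size p)) f => [|k IH] p lepk f p0 annf.
  by move: lepk; rewrite leqn0 size_poly_eq0 (negbTE p0).
have [sp1|sp1] := eqVneq (size p) 1%N.
  have pC : p = (p`_0)%:P by apply: size1_polyC; rewrite sp1.
  exists [::]; rewrite expoly_sum_nil; apply: (@annihilatesC p`_0).
    by rewrite -polyC_eq0 -pC.
  by rewrite -pC.
have [a /factor_theorem[q pE]] := closed_rootP p sp1.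
have q0 : q != 0 by apply: contraNneq p0 => q0; rewrite pE q0 mul0r.
have leqk : (size q <= k)%N.
  by move: lepk; rewrite pE size_Mmonic ?monicXsubC // size_XsubC addn2.
have /annihilates_dsub : annihilates (('X - a%:P) * q) f by rewrite mulrC -pE.
case/(IH q leqk _ q0) => l dfE; have [l' dhE] := dsub_expoly_sum_surj a l.
have /egf_deriv_eq_scale fhE :
    egf_deriv (f - expoly_sum l') = a *: (f - expoly_sum l').
  by apply/eqP; rewrite -subr_eq0 -/(dsub a _) linearB /= dfE dhE subrr.
exists ((a, ((f - expoly_sum l') 0%N)%:P) :: l').
by rewrite expoly_sum_cons expolyC -fhE subrK.
Qed.

Definition expolys_mul (l1 l2 : seq (CC * {poly CC})) :=
  [seq (x.1 + y.1, x.2 * y.2) | x <- l1, y <- l2].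

Definition expolys_opp (l : seq (CC * {poly CC})) := [seq (x.1, - x.2) | x <- l].

Lemma expoly_sum_mul l1 l2 :
  expoly_sum (expolys_mul l1 l2) = expoly_sum l1 * expoly_sum l2.
Proof.
rewrite /expoly_sum big_allpairs_dep mulr_suml; apply: eq_bigr => x _.
by rewrite mulr_sumr; apply: eq_bigr => y _; rewrite expolyM.
Qed.

Lemma expoly_sum_opp l : expoly_sum (expolys_opp l) = - expoly_sum l.
Proof.
by rewrite /expoly_sum big_map -sumrN; apply: eq_bigr => x _; rewrite linearN.
Qed.

Lemma Cfin_expoly_sum (f : egf) : Cfin f <-> exists l, f = expoly_sum l.
Proof.
split=> [[p p0 annf]|[l ->]]; first exact: annihilated_expoly_sum p0 annf.
by exists (expoly_ann l); [apply: expoly_ann_neq0 | apply: annihilates_expoly_sum].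
Qed.

Lemma CfinD (f g : egf) : Cfin f -> Cfin g -> Cfin (f + g).
Proof.
move=> /Cfin_expoly_sum[l1 ->] /Cfin_expoly_sum[l2 ->]; apply/Cfin_expoly_sum.
by exists (l1 ++ l2); rewrite expoly_sum_cat.
Qed.

Lemma CfinM (f g : egf) : Cfin f -> Cfin g -> Cfin (f * g).
Proof.
move=> /Cfin_expoly_sum[l1 ->] /Cfin_expoly_sum[l2 ->]; apply/Cfin_expoly_sum.
by exists (expolys_mul l1 l2); rewrite expoly_sum_mul.
Qed.

Lemma Cfin_expoly a P : Cfin (expoly a P).
Proof.
apply/Cfin_expoly_sum; exists [:: (a, P)].
by rewrite expoly_sum_cons expoly_sum_nil addr0.
Qed.

Lemma Cfin_poly P : Cfin (egf_poly P).
Proof. by rewrite -expoly0; apply: Cfin_expoly. Qed.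

Lemma Cfin0 : Cfin (0 : egf).
Proof. by rewrite -(raddf0 egf_poly); apply: Cfin_poly. Qed.

Lemma Cfin1 : Cfin (1 : egf).
Proof. by rewrite -(rmorph1 egf_poly); apply: Cfin_poly. Qed.

Lemma Cfin_prod (s : seq DF) :
  (forall y, List.In y s -> Cfin y) -> Cfin (\prod_(x <- s) (x : egf)).
Proof.
elim: s => [|y s IH] sP; first by rewrite big_nil; apply: Cfin1.
rewrite big_cons; apply: CfinM; first by apply: sP; left.
by apply: IH => z zs; apply: sP; right.
Qed.

(** * A derivation at the augmentation *)

Lemma expoly_sum_at0 l : expoly_sum l 0%N = \sum_(x <- l) x.2`_0.
Proof.
by rewrite /expoly_sum egf_sum; apply: eq_bigr => x _; rewrite expoly_at0.
Qed.

(* On exponential polynomials, [sum_a P_a(t) e^(a t) |-> sum_a P_a(0) Im a] is a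
   derivation at the augmentation [f |-> f 0], well defined by independence. *)
Definition derIm (l : seq (CC * {poly CC})) : CC := \sum_(x <- l) x.2`_0 * 'Im x.1.

Lemma expoly_sum_split a l : expoly_sum l =
  expoly a (\sum_(y <- l | y.1 == a) y.2) + expoly_sum [seq y <- l | y.1 != a].
Proof.
rewrite {1}/expoly_sum (bigID (fun y => y.1 == a)) /= linear_sum.
rewrite /expoly_sum big_filter.
by congr (_ + _); apply: eq_bigr => y /eqP ->.
Qed.

Lemma derIm_split a l : derIm l =
  (\sum_(y <- l | y.1 == a) y.2)`_0 * 'Im a + derIm [seq y <- l | y.1 != a].
Proof.
rewrite {1}/derIm (bigID (fun y => y.1 == a)) /= coef_sum mulr_suml.
rewrite /derIm big_filter.
by congr (_ + _); apply: eq_bigr => y /eqP ->.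
Qed.

Lemma derIm_cat l1 l2 : derIm (l1 ++ l2) = derIm l1 + derIm l2.
Proof. exact: big_cat. Qed.

Lemma derIm_eq0 l : expoly_sum l = 0 -> derIm l = 0.
Proof.
elim: {l}(size l) {-2}l (leqnn (size l)) => [|k IH] [|x l] //= lelk l0;
  try by rewrite /derIm big_nil.
have notin : x.1 \notin [seq y.1 | y <- [seq y <- x :: l | y.1 != x.1]].
  apply/mapP => -[y]; rewrite mem_filter => /andP[/negbTE neq _] eq_xy.
  by rewrite eq_xy eqxx in neq.
have Q0 := expoly_indep notin (etrans (esym (expoly_sum_split x.1 (x :: l))) l0).
move: l0; rewrite (expoly_sum_split x.1) Q0 linear0 add0r => l0.
rewrite (derIm_split x.1) Q0 coef0 mul0r add0r; apply: IH l0.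
by rewrite /= eqxx /= size_filter (leq_trans (count_size _ _)).
Qed.

Lemma derIm_eq l1 l2 : expoly_sum l1 = expoly_sum l2 -> derIm l1 = derIm l2.
Proof.
move=> eq12; apply/eqP; rewrite -subr_eq0; apply/eqP.
have /derIm_eq0 : expoly_sum (l1 ++ expolys_opp l2) = 0.
  by rewrite expoly_sum_cat expoly_sum_opp eq12 subrr.
rewrite derIm_cat /derIm big_map => sum0; rewrite -[RHS]sum0 -sumrN.
by congr (_ + _); apply: eq_bigr => x _; rewrite coefN mulNr.
Qed.

Lemma derIm_mul l1 l2 : derIm (expolys_mul l1 l2) =
  expoly_sum l2 0%N * derIm l1 + expoly_sum l1 0%N * derIm l2.
Proof.
rewrite !expoly_sum_at0 /derIm mulr_sumr mulr_suml -big_split.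
rewrite /expolys_mul big_allpairs_dep.
apply: eq_bigr => x _; rewrite mulr_suml mulr_sumr -big_split; apply: eq_bigr => y _ /=.
by rewrite coef0M raddfD; ring.
Qed.

(** * The powers of I and J *)

Lemma sumF_E (s : seq DF) : sumF s = \sum_(x <- s) (x : egf).
Proof. by elim: s => [|x s IH]; rewrite ?big_nil // big_cons /= IH. Qed.

Lemma prodF_E (s : seq DF) : prodF s = \prod_(x <- s) (x : egf).
Proof. by elim: s => [|x s IH]; rewrite ?big_nil // big_cons /= IH. Qed.

Lemma powIdeal_sumE (s : seq (DF * seq DF)) :
  sumF [seq convF p.1 (prodF p.2) | p <- s] =
  \sum_(p <- s) (p.1 : egf) * \prod_(x <- p.2) (x : egf).
Proof. by rewrite sumF_E big_map; apply: eq_bigr => p _; rewrite prodF_E. Qed.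

Lemma powIdeal0 A S n : powIdeal A S n (0 : egf).
Proof. by exists [::]. Qed.

Lemma powIdealD A S n (x y : egf) :
  powIdeal A S n x -> powIdeal A S n y -> powIdeal A S n (x + y).
Proof.
move=> [s1 [s1P ->]] [s2 [s2P ->]]; exists (s1 ++ s2); split.
  by move=> p /(List.in_app_or s1 s2 p)[]; [apply: s1P | apply: s2P].
by rewrite !powIdeal_sumE big_cat.
Qed.

Lemma Jpow_Cfin n (f : egf) : Jpow n f -> Cfin f.
Proof.
move=> [s [sP ->]]; rewrite powIdeal_sumE.
elim: s sP => [|p s IH] sP; first by rewrite big_nil; apply: Cfin0.
have [Cp1 _ p2J] := sP p (or_introl erefl).
rewrite big_cons; apply: CfinD; last by apply: IH => q qs; apply: sP; right.
by apply: CfinM => //; apply: Cfin_prod => y /p2J[].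
Qed.

Lemma Jpow_succ n (f : egf) : Jpow n.+1 f -> Jpow n f.
Proof.
move=> [s [sP ->]]; rewrite powIdeal_sumE.
elim: s sP => [|p s IH] sP; first by rewrite big_nil; apply: powIdeal0.
rewrite big_cons; apply: powIdealD; last by apply: IH => q qs; apply: sP; right.
have [] := sP p (or_introl erefl); case: p {IH sP} => r [|g gs] //= Cr [sz] gsJ.
exists [:: ((r : egf) * (g : egf) : egf, gs)]; split.
  move=> q [<-|//] /=; split => //; last by move=> y ys; apply: gsJ; right.
  by apply: CfinM => //; case: (gsJ g (or_introl erefl)).
by rewrite powIdeal_sumE big_seq1 /= big_cons mulrA.
Qed.

Definition vanish (f : egf) n := forall k, (k < n)%N -> f k = 0.

Lemma vanishD f g n : vanish f n -> vanish g n -> vanish (f + g) n.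
Proof. by move=> vf vg k ltkn; rewrite egfD vf // vg // addr0. Qed.

Lemma vanishM f g i j : vanish f i -> vanish g j -> vanish (f * g) (i + j).
Proof.
move=> vf vg k ltk; rewrite egfM big1 // => -[m ltmk] _ /=.
have [ltmi|leim] := ltnP m i; first by rewrite vf // mulr0 mul0r.
by rewrite vg ?mulr0 //; lia.
Qed.

Lemma powIdeal_vanish A S n (f : egf) :
  (forall y : DF, S y -> y 0%N = 0) -> powIdeal A S n f -> vanish f n.
Proof.
move=> S0 [s [sP ->]]; rewrite powIdeal_sumE.
elim: s sP => [|p s IH] sP; first by rewrite big_nil.
rewrite big_cons; apply: vanishD; last by apply: IH => q qs; apply: sP; right.
have [_ <- p2S] := sP p (or_introl erefl); rewrite -[size _]add0n.
apply: vanishM => //; elim: (p.2) p2S => [|y t IHt] tS; first by [].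
rewrite big_cons /= -add1n; apply: vanishM.
  by move=> k; rewrite ltnS leqn0 => /eqP ->; apply/S0/tS; left.
by apply: IHt => z zt; apply: tS; right.
Qed.

Definition tau : egf := egf_poly 'X.

Lemma tau0 : tau 0%N = 0.
Proof. by rewrite /tau /egf_poly coefX mulr0. Qed.

Lemma tau_expE n : tau ^+ n = egf_poly 'X^n.
Proof. by rewrite rmorphXn. Qed.

Lemma vanish_tau_dvd (f : egf) n : vanish f n -> exists r : egf, f = r * tau ^+ n.
Proof.
move=> vf; pose r : egf := fun m => f (m + n)%N * m`!%:R / (m + n)`!%:R.
exists r; apply: egfP => k; rewrite tau_expE.
change (f k = egf_mul r (egf_poly 'X^n) k).
rewrite (@egf_mulE _ _ (egf_trunc r k.+1) 'X^n); first last.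
- by move=> j _; rewrite /egf_poly mulrC mulKf ?natf_fact_neq0.
- by move=> j lejk; rewrite coef_egf_trunc.
rewrite coefMXn; case: ltnP => [/vf->|lenk]; first by rewrite mulr0.
rewrite coef_egf_trunc ?ltnS ?leq_subr // /r subnK //.
by field; rewrite !natf_fact_neq0.
Qed.

Lemma In_nseq (T : Type) n (x y : T) : List.In y (nseq n x) -> y = x.
Proof. by elim: n => //= n IH [->|/IH]. Qed.

Lemma prod_nseq_tau n : \prod_(x <- nseq n (tau : DF)) (x : egf) = tau ^+ n.
Proof. by elim: n => [|n IH]; rewrite ?big_nil ?expr0 // big_cons IH exprS. Qed.

Lemma Ipow_vanish n (f : egf) : Ipow n f <-> vanish f n.
Proof.
split; first by apply: powIdeal_vanish.
move=> /vanish_tau_dvd[r fE]; subst f; exists [:: (r : DF, nseq n (tau : DF))]; split.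
  move=> p [<-|//]; split=> //=; first by rewrite size_nseq.
  by move=> y yin; rewrite (In_nseq yin); apply: tau0.
by rewrite powIdeal_sumE big_seq1 prod_nseq_tau.
Qed.

Lemma Jpow_vanish n (f : egf) : Jpow n f -> vanish f n.
Proof. by apply: powIdeal_vanish => y []. Qed.

Lemma Jpow_monomial (c : CC) n : Jpow n (c *: tau ^+ n).
Proof.
exists [:: (c *: 1 : egf, nseq n (tau : DF))]; split.
  move=> p [<-|//]; split=> /=.
  - by rewrite -(rmorph1 egf_poly) -linearZ; apply: Cfin_poly.
  - by rewrite size_nseq.
  - by move=> y yin; rewrite (In_nseq yin); split; [apply: tau0 | apply: Cfin_poly].
by rewrite powIdeal_sumE big_seq1 prod_nseq_tau -scalerAl mul1r.
Qed.

Lemma Jpow2_derIm (f : egf) : Jpow 2 f -> exists l, f = expoly_sum l /\ derIm l = 0.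
Proof.
move=> [s [sP ->]]; rewrite powIdeal_sumE.
elim: s sP => [|p s IH] sP.
  by exists [::]; rewrite big_nil expoly_sum_nil /derIm big_nil.
have [|l [sE dl]] := IH; first by move=> q qs; apply: sP; right.
rewrite big_cons sE.
have [] := sP p (or_introl erefl); case: p {IH sP} => r [|g [|h []]] //= Cr _ ghJ.
have [g0 /Cfin_expoly_sum[lg gE]] := ghJ g (or_introl erefl).
have [h0 /Cfin_expoly_sum[lh hE]] := ghJ h (or_intror (or_introl erefl)).
have /Cfin_expoly_sum[lr rE] := Cr.
exists (expolys_mul lr (expolys_mul lg lh) ++ l); split.
  by rewrite expoly_sum_cat !expoly_sum_mul !big_cons big_nil mulr1 -rE -gE -hE.
rewrite derIm_cat dl addr0 !derIm_mul !expoly_sum_mul -gE -hE egfM0.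
by rewrite /Iid in g0 h0; rewrite g0 h0; ring.
Qed.

(** * The tails of the exponential series *)

(* [e^(i t) - sum_(k < m) (i t)^k / k!] *)
Definition exp_tail (m : nat) : egf := fun n => if (n < m)%N then 0 else 'i ^+ n.

Definition exp_tail_expolys (m : nat) : seq (CC * {poly CC}) :=
  [:: ('i, 1); (0, - \poly_(k < m) ('i ^+ k / k`!%:R))].

Lemma exp_tailE m : exp_tail m = expoly_sum (exp_tail_expolys m).
Proof.
rewrite !expoly_sum_cons expoly_sum_nil addr0 /= -polyC1 expolyC scale1r expoly0.
apply: egfP => n; rewrite egfD /egf_poly coefN coef_poly /exp_tail /egf_exp.
case: ltnP => _; last by rewrite oppr0 mulr0 addr0.
by rewrite mulrN mulrC divfK ?natf_fact_neq0 // subrr.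
Qed.

Lemma Cfin_exp_tail m : Cfin (exp_tail m).
Proof. by apply/Cfin_expoly_sum; exists (exp_tail_expolys m); apply: exp_tailE. Qed.

Lemma vanish_exp_tail m : vanish (exp_tail m) m.
Proof. by move=> k ltkm; rewrite /exp_tail ltkm. Qed.

Lemma exp_tail_notin_Jpow2 m : ~ Jpow 2 (exp_tail m).
Proof.
case/Jpow2_derIm => l [/esym lE dl0].
have := derIm_eq (etrans lE (exp_tailE m)).
rewrite dl0 /derIm !big_cons big_nil coef1 coefN coef_poly /= raddf0 Im_i.
by rewrite mul1r mulr0 !addr0 => /eqP; rewrite eq_sym oner_eq0.
Qed.

Lemma exp_tailS m : exp_tail m.+1 - exp_tail m = (- 'i ^+ m / m`!%:R) *: tau ^+ m.
Proof.
apply: egfP => k; rewrite egfB egfZ tau_expE /egf_poly coefXn /exp_tail.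
case: (ltngtP k m) => [ltkm|ltmk|->].
- by rewrite ltnS (ltnW ltkm) subr0 !mulr0.
- by rewrite ltnNge ltmk subrr !mulr0.
- by rewrite ltnSn sub0r mulr1 divfK ?natf_fact_neq0.
Qed.

Lemma cosetJ_refl n (a : DF) : cosetJ n a a.
Proof. by rewrite /cosetJ [addF _ _](subrr (a : egf)); apply: powIdeal0. Qed.

Definition tail_family (n : nat) : DF -> Prop := cosetJ n (exp_tail n).
Definition zero_family (n : nat) : DF -> Prop := cosetJ n zeroF.

Lemma tail_family_compat : is_compat tail_family.
Proof.
split=> [n|n y]; first by exists (exp_tail n); [apply: Cfin_exp_tail|].
rewrite /tail_family /cosetJ => yJ.
rewrite [addF _ _](_ : _ = ((y : egf) - exp_tail n.+1) + (exp_tail n.+1 - exp_tail n)).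
  by apply: powIdealD; [apply: Jpow_succ | rewrite exp_tailS; apply: Jpow_monomial].
by rewrite addrA subrK.
Qed.

Lemma zero_family_compat : is_compat zero_family.
Proof.
split=> [n|n y]; first by exists zeroF; [apply: Cfin0|].
exact: Jpow_succ.
Qed.

Lemma iota_hat_vanish (x : Compl) k (b : DF) :
  cval x k.+1 = cosetJ k.+1 b -> b k = 0 -> iota_hat x k = 0.
Proof.
move=> xE bk0; rewrite /iota_hat /rep.
case: ClassicalEpsilon.constructive_indefinite_description => a [_ aE] /=.
have : cosetJ k.+1 a b by rewrite -aE xE; apply: cosetJ_refl.
move=> /Jpow_vanish /(_ k (ltnSn k)) /eqP.
by rewrite /addF /oppF bk0 add0r oppr_eq0 => /eqP.
Qed.

Lemma iota_hat_not_injective : ~ injective iota_hat.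
Proof.
move=> inj.
pose x := MkCompl tail_family_compat; pose z := MkCompl zero_family_compat.
have xz : iota_hat x = iota_hat z.
  apply: funext => k; rewrite (@iota_hat_vanish x k (exp_tail k.+1)) //.
    by rewrite (@iota_hat_vanish z k zeroF).
  exact: vanish_exp_tail.
have /(congr1 (fun y : Compl => cval y 2)) x2z2 := inj _ _ xz.
have : cval x 2 (exp_tail 2) by apply: cosetJ_refl.
rewrite x2z2 /= /zero_family /cosetJ [addF _ _](subr0 (exp_tail 2 : egf)).
exact: exp_tail_notin_Jpow2.
Qed.

Lemma Jpow_neq_Ipow_Cfin : ~ (forall n f, Jpow n f <-> Ipow n f /\ Cfin f).
Proof.
move=> JI; apply: (@exp_tail_notin_Jpow2 2); apply/JI.
by split; [apply/Ipow_vanish/vanish_exp_tail | apply: Cfin_exp_tail].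
Qed.

Lemma open_Jadic_Jpow n : open_Jadic (Jpow n).
Proof.
split=> [|f fJ]; first by move=> f; apply: Jpow_Cfin.
exists n => h _ hfJ; rewrite -[h](subrK (f : egf)); exact: powIdealD.
Qed.

Lemma not_open_induced_Jpow2 : ~ open_induced (Jpow 2).
Proof.
case=> V openV JV; have [V0 _] := proj1 (JV zeroF) (powIdeal0 _ _ _).
have [n nV] := openV zeroF V0.
apply: (@exp_tail_notin_Jpow2 n); apply/JV; split; last exact: Cfin_exp_tail.
apply: nV; rewrite [addF _ _](subr0 (exp_tail n : egf)).
by apply/Ipow_vanish/vanish_exp_tail.
Qed.

Theorem proposition4p5 :
  [/\ (injective iota_hat <-> homeo iota_hat),
      (homeo iota_hat <-> (forall (n : nat) (f : DF), Jpow n f <-> (Ipow n f /\ Cfin f)))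
    & ((forall (n : nat) (f : DF), Jpow n f <-> (Ipow n f /\ Cfin f)) <->
       (forall U : DF -> Prop, open_Jadic U <-> open_induced U))].
Proof.
have not_homeo : ~ homeo iota_hat.
  by case=> -[g gK _] _; apply/iota_hat_not_injective/(can_inj gK).
have not_top : ~ (forall U, open_Jadic U <-> open_induced U).
  by move=> JI; apply/not_open_induced_Jpow2/JI/open_Jadic_Jpow.
have := iota_hat_not_injective; have := Jpow_neq_Ipow_Cfin.
by split; split=> hyp; exfalso; auto.
Qed.
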